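(* Let $X\in T^1(\Sigma)$. Then $X^+X=X=XX^*$ (with pruned operations).
   Context: Let $\Sigma$ be a set. A $\Sigma$-tree is a finite directed graph whose underlying undirected graph is a tree, edges labelled by elements of $\Sigma$, with distinguished start and end vertices such that there is a (possibly empty) directed path from start to end vertex. A morphism $X\to Y$ maps vertices to vertices and edges to edges, preserving initial vertex, terminal vertex and label of each edge, and mapping start/end vertex to start/end vertex; isomorphisms are morphisms bijective on vertices and edges. A retraction is an idempotent morphism $X\to X$, its image a retract; $X$ is pruned if it admits no non-identity retraction. Every tree $X$ has a pruned retract, unique up to isomorphism, whose isomorphism type is $\overline{X}$. $T^1(\Sigma)$ is the set of isomorphism types of pruned $\Sigma$-trees. Unpruned operations: $X\times Y$ identifies the end vertex of (a copy of) $X$ with the start vertex of (a disjoint copy of) $Y$, start vertex that of $X$, end vertex that of $Y$; $X^{(+)}$ is $X$ with end vertex moved to the start vertex; $X^{( * )}$ is $X$ with start vertex moved to the end vertex. Pruned operations: $XY=\overline{X\times Y}$, $X^+=\overline{X^{(+)}}$, $X^*=\overline{X^{( * )}}$. *)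

From HB Require Import structures.
From mathcomp Require Import all_boot.
Set Implicit Arguments. Unset Strict Implicit. Unset Printing Implicit Defensive.

(* Sigma-graphs: finite directed multigraphs with Sigma-labelled edges and
   distinguished start/end vertices (raw data; tree-ness is a predicate). *)
Record sgraph (Sigma : Type) := SGraph {
  vert : finType;
  edge : finType;
  src : edge -> vert;
  tgt : edge -> vert;
  lab : edge -> Sigma;
  st : vert;
  en : vert }.

Section Defs.
Variable Sigma : Type.
Implicit Types X Y Z P : sgraph Sigma.

Definition uadj X : rel (vert X) :=
  fun u v => [exists e, ((src e == u) && (tgt e == v)) || ((src e == v) && (tgt e == u))].
Definition dadj X : rel (vert X) :=
  fun u v => [exists e, (src e == u) && (tgt e == v)].

Definition utree X : Prop :=
  (forall u v : vert X, connect (@uadj X) u v) /\ #|edge X|.+1 = #|vert X|.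

Definition is_tree X : Prop := utree X /\ connect (@dadj X) (st X) (en X).

Record hom X Y := Hom { hV : vert X -> vert Y; hE : edge X -> edge Y }.

Definition is_morph X Y (f : hom X Y) : Prop :=
  [/\ forall e, src (hE f e) = hV f (src e),
      forall e, tgt (hE f e) = hV f (tgt e),
      forall e, lab (hE f e) = lab e,
      hV f (st X) = st Y & hV f (en X) = en Y].

Definition iso X Y : Prop :=
  exists f : hom X Y, [/\ is_morph f, bijective (hV f) & bijective (hE f)].

Definition retraction X (r : hom X X) : Prop :=
  [/\ is_morph r, forall v, hV r (hV r v) = hV r v & forall e, hE r (hE r e) = hE r e].

Definition pruned X : Prop :=
  forall r : hom X X, retraction r -> (forall v, hV r v = v) /\ (forall e, hE r e = e).

(* P is isomorphic to the image (sub-Sigma-graph) of r : Z -> Z, via an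
   injective morphism P -> Z whose range is exactly the image of r *)
Definition image_of Z (r : hom Z Z) P : Prop :=
  exists i : hom P Z, [/\ is_morph i, injective (hV i), injective (hE i),
    forall v, (exists p, hV i p = v) <-> (exists w, hV r w = v) &
    forall e, (exists p, hE i p = e) <-> (exists d, hE r d = e)].

Definition pruned_retract_of P Z : Prop :=
  pruned P /\ exists r : hom Z Z, retraction r /\ image_of r P.

Definition prodV X Y := (vert X + {v : vert Y | v != st Y})%type.
Definition injY X Y (v : vert Y) : prodV X Y :=
  if insub v is Some w then inr w else inl (en X).
Definition prodE X Y := (edge X + edge Y)%type.

Definition uprod X Y : sgraph Sigma :=
  @SGraph Sigma ((vert X + {v : vert Y | v != st Y})%type : finType)
    ((edge X + edge Y)%type : finType)
    (fun e => match e with inl e => inl (src e) | inr e => injY X (src e) end)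
    (fun e => match e with inl e => inl (tgt e) | inr e => injY X (tgt e) end)
    (fun e => match e with inl e => lab e | inr e => lab e end)
    (inl (st X)) (injY X (en Y)).

Definition uplus X : sgraph Sigma :=
  @SGraph Sigma (vert X) (edge X) (@src _ X) (@tgt _ X) (@lab _ X) (st X) (st X).

Definition ustar X : sgraph Sigma :=
  @SGraph Sigma (vert X) (edge X) (@src _ X) (@tgt _ X) (@lab _ X) (en X) (en X).

End Defs.

From mathcomp Require Import all_boot.
From mathcomp Require Import zify.
Set Implicit Arguments. Unset Strict Implicit. Unset Printing Implicit Defensive.

(* The pruned retract P of X^(+) embeds into X^(+), whose start and end
   vertices coincide, so start and end of P coincide as well.  Hence P x X
   retracts onto X: fold the copy of P onto X along its embedding and keep X.
   Two pruned retracts of the same graph map into each other, and every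
   endomorphism of a pruned graph is an automorphism (a positive power of it
   is idempotent, hence a retraction, hence the identity); so the pruned
   retract of P x X is X.  The case X X^* is symmetric. *)

Lemma iter_idem_of_repeat (T : Type) (h : T -> T) m n : m < n ->
  iter m h =1 iter n h ->
  exists2 k, 0 < k & forall x, iter k h (iter k h x) = iter k h x.
Proof.
move=> lt_mn Emn; set p := n - m.
have iter_period t j x : m <= j -> iter (j + t * p) h x = iter j h x.
  elim: t j => [|t IH] j le_mj; first by rewrite mul0n addn0.
  have -> : j + t.+1 * p = (j + t * p - m) + n by rewrite /p; lia.
  by rewrite iterD -Emn -iterD subnK ?IH //; lia.
exists (n * p) => [|x]; first by rewrite /p; lia.
by rewrite -iterD iter_period //; rewrite /p; nia.
Qed.

Lemma iter_idem (T : finType) (h : T -> T) :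
  exists2 k, 0 < k & forall x, iter k h (iter k h x) = iter k h x.
Proof.
pose F (m : 'I_#|{ffun T -> T}|.+1) := [ffun x => iter m h x].
have /injectivePn[a [b neq_ab Fab]] : ~~ injectiveb F.
  by apply/injectiveP => /leq_card; rewrite card_ord ltnn.
have Eab : iter a h =1 iter b h.
  by move=> x; have := congr1 (fun f : {ffun T -> T} => f x) Fab; rewrite !ffunE.
case: (ltngtP a b) => [lt_ab|lt_ba|eq_ab].
- exact: iter_idem_of_repeat lt_ab Eab.
- exact: iter_idem_of_repeat lt_ba (fun x => esym (Eab x)).
- by rewrite (val_inj eq_ab) eqxx in neq_ab.
Qed.

Lemma bij_of_comp_bij (T U : Type) (f : T -> U) (g : U -> T) :
  bijective (g \o f) -> bijective (f \o g) -> bijective f.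
Proof.
move=> [u1 c1 _] [u2 _ c2'].
have inj_f : injective f by move=> x y Exy; rewrite -(c1 x) -(c1 y) /= Exy.
by exists (g \o u2) => [x|y]; [apply: inj_f; apply: c2' | apply: c2'].
Qed.

Section Retracts.
Variable Sigma : Type.
Implicit Types X Y Z A B P : sgraph Sigma.

Definition hcomp X Y Z (g : hom Y Z) (f : hom X Y) : hom X Z :=
  Hom (hV g \o hV f) (hE g \o hE f).

Definition hiter n X (h : hom X X) : hom X X :=
  Hom (iter n (hV h)) (iter n (hE h)).

Definition is_retract A Z : Prop :=
  exists (g : hom Z A) (j : hom A Z), [/\ is_morph g, is_morph j,
    forall v, hV g (hV j v) = v & forall e, hE g (hE j e) = e].

Lemma morph_comp X Y Z (g : hom Y Z) (f : hom X Y) :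
  is_morph f -> is_morph g -> is_morph (hcomp g f).
Proof.
case=> sf tf lf stf enf [sg tg lg stg eng]; split=> [e|e|e||] /=.
- by rewrite sg sf.
- by rewrite tg tf.
- by rewrite lg lf.
- by rewrite stf stg.
- by rewrite enf eng.
Qed.

Lemma morph_iter n X (h : hom X X) : is_morph h -> is_morph (hiter n h).
Proof. by move=> mh; elim: n => [|n IH]; [split | exact: morph_comp IH mh]. Qed.

Lemma pruned_endo_bij A (h : hom A A) : pruned A -> is_morph h ->
  bijective (hV h) /\ bijective (hE h).
Proof.
move=> prA mh.
(* One map on vertices + edges, so that a single power works for both. *)
pose H (x : vert A + edge A) :=
  match x with inl v => inl (hV h v) | inr e => inr (hE h e) end.
have iterH n : (forall v, iter n H (inl v) = inl (iter n (hV h) v)) /\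
               (forall e, iter n H (inr e) = inr (iter n (hE h) e)).
  by elim: n => [|n [IHv IHe]] //; split=> x; rewrite !iterS ?IHv ?IHe.
have [[|k] // _ idemH] := iter_idem H.
have ret_hk : retraction (hiter k.+1 h).
  split=> [|v|e] /=; first exact: morph_iter.
  - by have := idemH (inl v); rewrite !(iterH _).1 => -[].
  - by have := idemH (inr e); rewrite !(iterH _).2 => -[].
have [/= idV idE] := prA _ ret_hk.
split; apply: injF_bij.
- by apply: (@can_inj _ _ _ (iter k (hV h))) => v; rewrite -iterSr; exact: idV.
- by apply: (@can_inj _ _ _ (iter k (hE h))) => e; rewrite -iterSr; exact: idE.
Qed.

Lemma morph_factor A B Z (q : hom A Z) (i : hom B Z) :
  is_morph q -> is_morph i -> injective (hV i) -> injective (hE i) ->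
  (forall a, exists b, hV i b = hV q a) -> (forall a, exists b, hE i b = hE q a) ->
  exists f : hom A B, is_morph f.
Proof.
move=> [sq tq lq stq enq] [si ti li sti eni] inj_iV inj_iE imV imE.
have imV' a : exists b, hV i b == hV q a by have [b <-] := imV a; exists b.
have imE' a : exists b, hE i b == hE q a by have [b <-] := imE a; exists b.
pose fV a := xchoose (imV' a); pose fE a := xchoose (imE' a).
have fVP a : hV i (fV a) = hV q a by apply/eqP/(xchooseP (imV' a)).
have fEP a : hE i (fE a) = hE q a by apply/eqP/(xchooseP (imE' a)).
exists (Hom fV fE); split=> [e|e|e||] /=; try apply: inj_iV.
- by rewrite -si fEP fVP sq.
- by rewrite -ti fEP fVP tq.
- by rewrite -li fEP lq.
- by rewrite fVP stq sti.
- by rewrite fVP enq eni.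
Qed.

Lemma pruned_images_iso Z A B (r1 r2 : hom Z Z) : pruned A -> pruned B ->
  is_morph r1 -> image_of r1 A -> is_morph r2 -> image_of r2 B -> iso A B.
Proof.
move=> prA prB mr1 [i1 [mi1 iV1 iE1 rV1 rE1]] mr2 [i2 [mi2 iV2 iE2 rV2 rE2]].
have [f mf] : exists f : hom A B, is_morph f.
  apply: (morph_factor (morph_comp mi1 mr2) mi2 iV2 iE2) => a.
  - by apply/rV2; exists (hV i1 a).
  - by apply/rE2; exists (hE i1 a).
have [g mg] : exists g : hom B A, is_morph g.
  apply: (morph_factor (morph_comp mi2 mr1) mi1 iV1 iE1) => a.
  - by apply/rV1; exists (hV i2 a).
  - by apply/rE1; exists (hE i2 a).
have [bgfV bgfE] := pruned_endo_bij prA (morph_comp mf mg).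
have [bfgV bfgE] := pruned_endo_bij prB (morph_comp mg mf).
by exists f; split; [|exact: bij_of_comp_bij bgfV bfgV|exact: bij_of_comp_bij bgfE bfgE].
Qed.

Lemma pruned_retract_iso A Z Q :
  is_retract A Z -> pruned A -> pruned_retract_of Q Z -> iso Q A.
Proof.
move=> [g [j [mg mj gjV gjE]]] prA [prQ [r [[mr _ _] imr]]].
apply: (pruned_images_iso prQ prA mr imr (r2 := hcomp j g)).
  exact: morph_comp.
exists j; split=> // [||v|e]; [exact: can_inj gjV | exact: can_inj gjE | |].
- by split=> [[p <-]|[w <-]]; [exists (hV j p); rewrite /= gjV | exists (hV g w)].
- by split=> [[p <-]|[d <-]]; [exists (hE j p); rewrite /= gjE | exists (hE g d)].
Qed.

Lemma pruned_retract_incl P Z : pruned_retract_of P Z ->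
  exists2 i : hom P Z, is_morph i & injective (hV i).
Proof. by move=> [_ [_ [_ [i [mi inj_iV _ _ _]]]]]; exists i. Qed.

Lemma incl_st_en P Z (i : hom P Z) : is_morph i -> injective (hV i) ->
  st Z = en Z -> st P = en P.
Proof. by move=> [_ _ _ sti eni] inj_iV stZ; apply: inj_iV; rewrite sti eni. Qed.

(* A map out of X x Y given on both factors is well defined on the glued
   vertex as soon as the two pieces agree there. *)
Lemma injY_glue X Y T (a : vert X -> T) (b : vert Y -> T) :
  b (st Y) = a (en X) -> forall v,
  match injY X v with inl u => a u | inr w => b (sval w) end = b v.
Proof.
move=> ab v; rewrite /injY; case: insubP => [w _ <- //|].
by rewrite negbK => /eqP ->.
Qed.

Lemma uprod_uplus_retract P X (f : hom P (uplus X)) :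
  is_morph f -> st P = en P -> is_retract X (uprod P X).
Proof.
move=> [sf tf lf stf enf] stP.
have glue := injY_glue (a := hV f) (b := id) (esym enf).
exists (@Hom _ (uprod P X) X
  (fun z => match z with inl u => hV f u | inr w => sval w end)
  (fun e => match e with inl e => hE f e | inr e => e end)).
exists (@Hom _ X (uprod P X) (@injY _ P X) inr).
split=> //.
- by split=> [[e|e]|[e|e]|[e|e]||] /=; rewrite ?glue ?sf ?tf ?lf.
- by split=> //=; rewrite /injY insubF ?eqxx ?stP.
Qed.

Lemma uprod_ustar_retract P X (f : hom P (ustar X)) :
  is_morph f -> st P = en P -> is_retract X (uprod X P).
Proof.
move=> [sf tf lf stf enf] stP.
have glue := injY_glue (a := id) (b := hV f) stf.
exists (@Hom _ (uprod X P) X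
  (fun z => match z with inl u => u | inr w => hV f (sval w) end)
  (fun e => match e with inl e => e | inr e => hE f e end)).
exists (@Hom _ X (uprod X P) inl inl).
split=> //.
- by split=> [[e|e]|[e|e]|[e|e]||] /=; rewrite ?glue ?sf ?tf ?lf.
- by split=> //=; rewrite /injY -stP insubF ?eqxx.
Qed.

End Retracts.

Theorem proposition4p7 (Sigma : Type) (X : sgraph Sigma) :
  is_tree X -> pruned X ->
  (forall P Q : sgraph Sigma,
      pruned_retract_of P (uplus X) -> pruned_retract_of Q (uprod P X) -> iso Q X) /\
  (forall P Q : sgraph Sigma,
      pruned_retract_of P (ustar X) -> pruned_retract_of Q (uprod X P) -> iso Q X).
Proof.
move=> _ prX; split=> P Q /pruned_retract_incl[i mi inj_iV]; apply: pruned_retract_iso prX.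
- exact: uprod_uplus_retract mi (incl_st_en mi inj_iV erefl).
- exact: uprod_ustar_retract mi (incl_st_en mi inj_iV erefl).
Qed.
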